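(* Under the setting and hypotheses (i),(ii) below, there exists a constant $C=C(W,F,R,l)>0$ such that for all integers $N>1$, all $\lambda>0$, all real $E\neq 0$, all $x\in\mathbb{T}$ and all $1\le\alpha,\alpha'\le Nl$, $$\frac{1}{Nl}\log\big|\tilde\mu_N(x,E)_{(\alpha,\alpha')}\big|\le -\frac{|p(\alpha)-p(\alpha')|}{Nl}\log(\lambda+|E|)+\log\Big(1+\frac{\lambda}{|E|}\Big)+C .$$
   Context: Let $l\ge1$ and let $W,R,F$ be $l\times l$ real symmetric matrix functions on $\mathbb{T}=\mathbb{R}/2\pi\mathbb{Z}$ such that (i) all entries of $W$ and all off-diagonal entries of $R,F$ are real analytic; (ii) the diagonal entries are $F_{ii}=\tilde\phi^F_{ii}/\phi^F_{ii}$, $R_{ii}=\tilde\phi^R_{ii}/\phi^R_{ii}$ with $\tilde\phi^F_{ii},\phi^F_{ii},\tilde\phi^R_{ii},\phi^R_{ii}$ real analytic, $\phi^F_{ii},\phi^R_{ii}$ having finitely many zeros. Let $M(x)=\mathrm{diag}\{\phi^F_{ii}(x)\}_{i}\,\mathrm{diag}\{\phi^R_{ii}(x)\}_{i}$ and, for fixed $\omega\in\mathbb{T}$, $M_j(x)=M(x+j\omega)$, $W_n(x)=W(x+n\omega)$, $R_n(x)=R(x+n\omega)$, $F_n(x)=F(x+n\omega)$. $H_\lambda(x)$ is the operator $[H_\lambda(x)\vec\varphi]_n=-(W_{n+1}(x)\vec\varphi_{n+1}+W_n^T(x)\vec\varphi_{n-1}+R_n(x)\vec\varphi_n)+\lambda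 F_n(x)\vec\varphi_n$ on $\ell^2(\mathbb{Z},\mathbb{R}^l)$, and $H_N(x)$ is its restriction to the sites $[1,N]$, an $Nl\times Nl$ matrix ($N\times N$ blocks of size $l\times l$). Define $\tilde H_N(x,E)=(H_N(x)-E)\,\mathrm{diag}\{\tfrac{1}{\sqrt{1+E^2}}M_j(x),\ 1\le j\le N\}$ (block-diagonal); its entries are real analytic in $x$. $\tilde\mu_N(x,E)_{(\alpha,\alpha')}$ denotes the $(\alpha',\alpha)$-minor of $\tilde H_N(x,E)$ (determinant after deleting row $\alpha'$ and column $\alpha$). Every $1\le\alpha\le Nl$ is written uniquely as $\alpha=p(\alpha)l+q(\alpha)$ with $p(\alpha)\in\{0,\dots,N-1\}$, $q(\alpha)\in\{1,\dots,l\}$. *)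

From HB Require Import structures.
From mathcomp Require Import all_boot all_order all_algebra.
From mathcomp Require Import all_classical all_reals all_analysis.
Set Implicit Arguments. Unset Strict Implicit. Unset Printing Implicit Defensive.
Import Order.TTheory GRing.Theory Num.Theory.
Import numFieldNormedType.Exports.
Local Open Scope classical_set_scope.
Local Open Scope ring_scope.

Section Defs.
Variable R : realType.

Definition real_analytic (f : R -> R) : Prop :=
  forall x0 : R, exists (a : nat -> R) (r : R), 0 < r /\
    forall x : R, `|x - x0| < r ->
      (fun n : nat => \sum_(k < n) a k * (x - x0) ^+ k) @ \oo --> f x.

(* functions on the torus T = R / 2 pi Z are 2pi-periodic functions on R *)
Definition periodic2pi (T : Type) (f : R -> T) : Prop :=
  forall x : R, f (x + 2 * pi) = f x.

Definition finitely_many_zeros (f : R -> R) : Prop :=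
  finite_set [set x : R | 0 <= x < 2 * pi /\ f x = 0].

(* entry of an l x l matrix at natural indices (0 outside range) *)
Definition ent (l : nat) (A : 'M[R]_l) (i k : nat) : R :=
  match insub i, insub k with
  | Some i', Some k' => A i' k'
  | _, _ => 0
  end.

Definition fent (l : nat) (f : 'I_l -> R) (i : nat) : R :=
  if insub i is Some i' then f i' else 0.

(* p(alpha) for the 0-based index a = alpha - 1 : alpha = p l + q, 1<=q<=l *)
Definition pidx (l n : nat) (a : 'I_n) : nat := (val a %/ l)%N.

(* The matrix tilde H_N(x,E) = (H_N(x) - E) diag{ M_j(x)/sqrt(1+E^2) },
   row index r = a*l + i (block a = site a+1, component i), 0-based;
   column index c = b*l + k.  Column c is scaled by M_{b+1}(x)_{kk}/sqrt(1+E^2)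
   where M(y)_{kk} = phiF_k(y) phiR_k(y).  The diagonal entries are written in
   their real-analytic form
     (-phitR_i phiF_i + lam phitF_i phiR_i - E phiF_i phiR_i)(x+(a+1)w)/sqrt(1+E^2),
   which equals (-R_ii + lam F_ii - E) M_ii / sqrt(1+E^2) wherever
   phiF_i, phiR_i do not vanish (and is its analytic extension elsewhere). *)
Definition tildeH (l N : nat) (W Rm Fm : R -> 'M[R]_l)
  (phiF phitF phiR phitR : 'I_l -> R -> R) (w lam E x : R) : 'M[R]_(N * l) :=
  \matrix_(r < N * l, c < N * l)
    let a := (val r %/ l)%N in let i := (val r %% l)%N in
    let b := (val c %/ l)%N in let k := (val c %% l)%N in
    let xr := x + (a.+1)%:R * w in
    let xc := x + (b.+1)%:R * w in
    let s := Num.sqrt (1 + E ^+ 2) in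
    let m := fent (fun j => phiF j xc * phiR j xc) k in
    if a == b then
      if i == k then
        (- fent (fun j => phitR j xr * phiF j xr) i
         + lam * fent (fun j => phitF j xr * phiR j xr) i
         - E * fent (fun j => phiF j xr * phiR j xr) i) / s
      else (- ent (Rm xr) i k + lam * ent (Fm xr) i k) * m / s
    else if b == a.+1 then
      (* block (n, n+1) = - W_{n+1}, n = a+1 *)
      - ent (W (x + (a.+2)%:R * w)) i k * m / s
    else if a == b.+1 then
      (* block (n, n-1) = - W_n^T, n = a+1 *)
      - ent (W xr) k i * m / s
    else 0.

(* tilde mu_N(x,E)_(alpha,alpha') : the (alpha',alpha)-minor, i.e. the
   determinant after deleting row alpha' and column alpha. *)
Definition tmu (l N : nat) (W Rm Fm : R -> 'M[R]_l)
  (phiF phitF phiR phitR : 'I_l -> R -> R) (w lam E x : R)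
  (al al' : 'I_(N * l)) : R :=
  \det (row' al' (col' al (tildeH N W Rm Fm phiF phitF phiR phitR w lam E x))).

End Defs.
Arguments tildeH {R l} N.
Arguments tmu {R l} N.

From HB Require Import structures.
From mathcomp Require Import all_boot all_order all_algebra.
From mathcomp Require Import all_classical all_reals all_analysis.
Import Order.TTheory GRing.Theory Num.Theory.
Import numFieldNormedType.Exports.
From mathcomp Require Import ring lra.

Set Implicit Arguments.
Unset Strict Implicit.
Unset Printing Implicit Defensive.

Local Open Scope ring_scope.

(* The entries of tilde H_N are built from finitely many real-analytic
   2pi-periodic functions, hence are bounded by a constant K uniformly in x.
   After factoring out 1/sqrt(1+E^2), tilde H_N is block tridiagonal with
   diagonal blocks of size O((1+lam+|E|) K^2) and off-diagonal blocks of size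
   O(K^2).  Conjugating it by diag(t^p(alpha)) with t = (1+lam+|E|)^(+-1)
   multiplies the off-diagonal blocks by at most 1+lam+|E|, so all row sums
   stay below 3 l K^2 (1+lam+|E|)/sqrt(1+E^2), while the (alpha,alpha')-minor
   gets multiplied by (1+lam+|E|)^|p(alpha)-p(alpha')|.  Bounding a
   determinant by the product of its row sums, and using
   (1+lam+|E|)/sqrt(1+E^2) <= 2 (1+lam/|E|), gives the estimate after taking
   logarithms. *)

Lemma periodicz (U V : zmodType) (f : U -> V) (T : U) :
  periodic f T -> forall (z : int) x, f (x + T *~ z) = f x.
Proof.
move=> fT [] n x; first exact: periodicn.
by rewrite NegzE mulrNz -(periodicn fT n.+1 (x - T *+ n.+1)) subrK.
Qed.

Section AnalyticBounds.
Variable R : realType.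

Lemma real_analytic_locally_bounded (f : R -> R) x0 : real_analytic f ->
  exists r c : R, 0 < r /\ forall y, `|y - x0| < r -> `|f y| <= c.
Proof.
move=> /(_ x0) [a [r [r_gt0 fE]]].
have r2_gt0 : 0 < r / 2 by rewrite divr_gt0.
have [M [_ aM]] : bounded_fun (fun k => a k * (r / 2) ^+ k).
  apply: cvg_series_bounded; apply/cvg_ex; exists (f (x0 + r / 2)).
  have := fE (x0 + r / 2); rewrite addrAC subrr add0r seriesEord; apply.
  by rewrite gtr0_norm // ltr_pdivrMr // ltr_pMr // ltr1n.
have aM1 k : `|a k| * (r / 2) ^+ k <= M + 1.
  by rewrite -(gtr0_norm r2_gt0) -normrX -normrM; apply: aM; rewrite ?ltrDl.
(* On the disc of radius r/4 the series is dominated by (M + 1) * sum_k 2^-k. *)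
exists (r / 4), (2 * (M + 1)); split => [|y y_near]; first by rewrite divr_gt0.
have r4_lt : r / 4 < r by rewrite ltr_pdivrMr // ltr_pMr // ltr1n.
apply: ler_cvg_to (cvg_norm (fE y (lt_trans y_near r4_lt))) (cvg_cst _) _.
apply: nearW => n; apply: le_trans (ler_norm_sum _ _ _) _.
have -> : 2 * (M + 1) = (M + 1) * (1 - 2^-1)^-1.
  by rewrite mulrC; congr (_ * _); field; lra.
apply: le_trans (geometric_le_lim n _ _ _) => //; last 2 first.
- exact: le_trans (mulr_ge0 (normr_ge0 _) (exprn_ge0 _ (ltW r2_gt0))) (aM1 0%N).
- by rewrite gtr0_norm // invf_lt1 // ltr1n.
rewrite seriesEord /=; apply: ler_sum => k _.
have -> : (2^-1) ^+ k = (r / 4) ^+ k / (r / 2) ^+ k.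
  by rewrite -expr_div_n; congr (_ ^+ _); field; rewrite gt_eqF.
rewrite normrM normrX mulrA ler_pdivlMr ?exprn_gt0 // mulrAC.
apply: ler_pM (aM1 k) _.
- by rewrite mulr_ge0 // exprn_ge0 // ltW.
- exact: exprn_ge0.
- by rewrite lerXn2r ?nnegrE ?normr_ge0 ?divr_ge0 ?ltW.
Qed.

Lemma real_analytic_bounded_on_segment (f : R -> R) (a b : R) : real_analytic f ->
  exists c : R, forall y, a <= y <= b -> `|f y| <= c.
Proof.
move=> fa.
have loc x : `[a, b]%classic x -> \forall y \near x & M \near +oo, `|f y| <= M.
  move=> _; have [r [c [r_gt0 fc]]] := real_analytic_locally_bounded x fa.
  near=> y M; apply: le_trans (fc y _) _.
    by near: y; apply: (@cvgr_distC_lt _ _ _ (nbhs x) _ id x _ r) => //; exact: cvg_id.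
  by rewrite /=; near: M; apply: nbhs_pinfty_ge; rewrite num_real.
Unshelve. all: end_near.
have [M [_ fM]] := (compact_near_coveringP `[a, b]%classic).1 (@segment_compact R a b)
  R (pinfty_nbhs R) (fun M y => `|f y| <= M) proper_pinfty_nbhs loc.
by exists (M + 1) => y aby; apply: fM; rewrite ?ltrDl //= in_itv.
Qed.

Lemma real_analytic_periodic_bounded (f : R -> R) :
  real_analytic f -> periodic2pi f -> exists c : R, forall y, `|f y| <= c.
Proof.
move=> fa fp; have [c fc] := real_analytic_bounded_on_segment 0 (2 * pi) fa.
exists c => y; have tp_gt0 : 0 < 2 * pi :> R by rewrite mulr_gt0 // pi_gt0.
set z := Num.floor (y / (2 * pi)).
rewrite -(subrK ((2 * pi) *~ z) y) (periodicz fp); apply: fc.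
have /andP[zy yz] := floor_itv (y / (2 * pi)).
rewrite subr_ge0 lerBlDr -mulrzl -ler_pdivlMr // zy /=.
rewrite -[X in _ <= X + _]mul1r -mulrDl -ler_pdivrMr //.
by have := ltW yz; rewrite intrD addrC.
Qed.

Lemma analytic_periodic_family_bounded (I : finType) (P : pred I) (f : I -> R -> R) :
  (forall i, P i -> real_analytic (f i) /\ periodic2pi (f i)) ->
  exists c : R, forall i y, P i -> `|f i y| <= c.
Proof.
move=> fP.
have fPc i : exists c : R, P i -> forall y, `|f i y| <= c.
  case: (boolP (P i)) => [Pi|nPi]; last by exists 0.
  have [fa fp] := fP i Pi; have [c fc] := real_analytic_periodic_bounded fa fp.
  by exists c.
have [c fc] := fin_all_exists fPc.
exists (\sum_i `|c i|) => i y Pi; apply: le_trans (fc i Pi y) _.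
rewrite (le_trans (ler_norm _)) // (bigD1 i) //= lerDl.
by apply: sumr_ge0 => *.
Qed.

Lemma analytic_matrix_entries_bounded l (A : R -> 'M[R]_l) (P : rel 'I_l) :
  periodic2pi A -> (forall i k, P i k -> real_analytic (fun x => A x i k)) ->
  exists c : R, forall i k y, P i k -> `|A y i k| <= c.
Proof.
move=> Ap Aa.
have [c cP] : exists c : R, forall ik y, P ik.1 ik.2 -> `|A y ik.1 ik.2| <= c.
  apply: (analytic_periodic_family_bounded (P := fun ik => P ik.1 ik.2)) => ik Pik.
  by split => [|y /=]; [exact: Aa | rewrite Ap].
by exists c => i k y /(cP (i, k) y).
Qed.

Lemma analytic_data_bounded l (W Rm Fm : R -> 'M[R]_l)
    (phiF phitF phiR phitR : 'I_l -> R -> R) :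
  periodic2pi W -> periodic2pi Rm -> periodic2pi Fm ->
  (forall i k : 'I_l, real_analytic (fun x => W x i k)) ->
  (forall i k : 'I_l, i != k -> real_analytic (fun x => Rm x i k)) ->
  (forall i k : 'I_l, i != k -> real_analytic (fun x => Fm x i k)) ->
  (forall i : 'I_l, real_analytic (phiF i) /\ real_analytic (phitF i)
                    /\ real_analytic (phiR i) /\ real_analytic (phitR i)) ->
  (forall i : 'I_l, periodic2pi (phiF i) /\ periodic2pi (phitF i)
                    /\ periodic2pi (phiR i) /\ periodic2pi (phitR i)) ->
  exists K : R, 1 <= K
    /\ (forall j y, `|phiF j y * phiR j y| <= K)
    /\ (forall j y, `|phitR j y * phiF j y| <= K)
    /\ (forall j y, `|phitF j y * phiR j y| <= K)
    /\ (forall (i k : 'I_l) y, `|W y i k| <= K)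
    /\ (forall (i k : 'I_l) y, i != k -> `|Rm y i k| <= K)
    /\ (forall (i k : 'I_l) y, i != k -> `|Fm y i k| <= K).
Proof.
move=> Wp Rmp Fmp Wa Rma Fma phia phip.
have [cW cWP] := analytic_matrix_entries_bounded (P := fun _ _ => true) Wp
  (fun i k _ => Wa i k).
have [cR cRP] := analytic_matrix_entries_bounded Rmp Rma.
have [cF cFP] := analytic_matrix_entries_bounded Fmp Fma.
have phi_bounded (f : 'I_l -> R -> R) :
    (forall i, real_analytic (f i) /\ periodic2pi (f i)) ->
    exists c : R, forall i y, `|f i y| <= c.
  move=> fP; have [c cP] := analytic_periodic_family_bounded (fun i (_ : xpredT i) => fP i).
  by exists c => i y; apply: cP.
have [c1 c1P] : exists c : R, forall i y, `|phiF i y| <= c.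
  by apply: phi_bounded => i; case: (phia i) (phip i) => ? _ [? _].
have [c2 c2P] : exists c : R, forall i y, `|phitF i y| <= c.
  by apply: phi_bounded => i; case: (phia i) (phip i) => _ [? _] [_ [? _]].
have [c3 c3P] : exists c : R, forall i y, `|phiR i y| <= c.
  by apply: phi_bounded => i; case: (phia i) (phip i) => _ [_ [? _]] [_ [_ [? _]]].
have [c4 c4P] : exists c : R, forall i y, `|phitR i y| <= c.
  by apply: phi_bounded => i; case: (phia i) (phip i) => _ [_ [_ ?]] [_ [_ [_ ?]]].
pose cs := [:: cW; cR; cF; c1 * c3; c4 * c1; c2 * c3].
pose K := \big[Num.max/1]_(c <- cs) c.
have le_K (u c : R) : `|u| <= c -> c \in cs -> `|u| <= K.
  by move=> uc c_cs; apply: le_trans uc (le_bigmax_seq 1 c xpredT id c_cs isT).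
have normrM_le (a b ca cb : R) : `|a| <= ca -> `|b| <= cb -> `|a * b| <= ca * cb.
  by move=> aca bcb; rewrite normrM ler_pM.
exists K; split; first exact: bigmax_ge_id.
split=> [j y|]; first apply: le_K (normrM_le _ _ _ _ (c1P j y) (c3P j y)) _.
  by rewrite !inE eqxx ?orbT.
split=> [j y|]; first apply: le_K (normrM_le _ _ _ _ (c4P j y) (c1P j y)) _.
  by rewrite !inE eqxx ?orbT.
split=> [j y|]; first apply: le_K (normrM_le _ _ _ _ (c2P j y) (c3P j y)) _.
  by rewrite !inE eqxx ?orbT.
split=> [i k y|]; first by apply: le_K (cWP i k y isT) _; rewrite !inE eqxx ?orbT.
split=> i k y ik; [apply: le_K (cRP i k y ik) _ | apply: le_K (cFP i k y ik) _];
  by rewrite !inE eqxx ?orbT.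
Qed.

End AnalyticBounds.

Section MinorBound.
Variable R : realFieldType.

Lemma sum_lift_le n (F : 'I_n.+1 -> R) (j : 'I_n.+1) :
  (forall k, 0 <= F k) -> \sum_(k < n) F (lift j k) <= \sum_k F k.
Proof. by move=> F_ge0; rewrite [leRHS](bigD1_ord j) //= lerDr. Qed.

Lemma det_norm_le_rowsum n (A : 'M[R]_n) (S : R) : 0 <= S ->
  (forall i, \sum_j `|A i j| <= S) -> `|\det A| <= S ^+ n.
Proof.
elim: n A => [|n IH] A S_ge0 rowA; first by rewrite det_mx00 normr1 expr0.
rewrite (expand_det_row A ord0) exprS; apply: le_trans (ler_norm_sum _ _ _) _.
apply: (@le_trans _ _ (\sum_j `|A ord0 j| * S ^+ n)).
  apply: ler_sum => j _; rewrite normrM ler_wpM2l //.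
  rewrite /cofactor normrM normrX normrN1 expr1n mul1r; apply: IH => // i.
  apply: le_trans (rowA (lift ord0 i)); under eq_bigr do rewrite !mxE.
  exact: (sum_lift_le (F := fun k => `|A (lift ord0 i) k|) j (fun k => normr_ge0 _)).
by rewrite -big_distrl /= ler_wpM2r ?exprn_ge0.
Qed.

Lemma det_minor_scale n (A : 'M[R]_n.+1) (b : 'I_n.+1 -> nat) (t : R)
    (i0 j0 : 'I_n.+1) :
  t != 0 ->
  \det (row' i0 (col' j0 (\matrix_(i, j) (t ^+ b i / t ^+ b j * A i j))))
    = t ^+ b j0 / t ^+ b i0 * \det (row' i0 (col' j0 A)).
Proof.
move=> t_neq0; pose T := \prod_i t ^+ b i.
have T_neq0 : T != 0 by apply/prodf_neq0 => i _; rewrite expf_neq0.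
have tb_neq0 i : t ^+ b i != 0 by rewrite expf_neq0.
have -> : row' i0 (col' j0 (\matrix_(i, j) (t ^+ b i / t ^+ b j * A i j)))
    = diag_mx (\row_i t ^+ b (lift i0 i)) *m row' i0 (col' j0 A)
      *m diag_mx (\row_j (t ^+ b (lift j0 j))^-1).
  by apply/matrixP => i j; rewrite mul_mx_diag mxE mul_diag_mx !mxE mulrAC.
rewrite !det_mulmx !det_diag.
have -> : \prod_i (\row_i t ^+ b (lift i0 i)) 0 i = T / t ^+ b i0.
  rewrite /T (bigD1_ord i0) //= [X in _ = X / _]mulrC mulfK //.
  by apply: eq_bigr => i _; rewrite mxE.
have -> : \prod_j (\row_j (t ^+ b (lift j0 j))^-1) 0 j = (T / t ^+ b j0)^-1.
  rewrite /T (bigD1_ord j0) //= [X in _ = (X / _)^-1]mulrC mulfK // -prodfV.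
  by apply: eq_bigr => j _; rewrite mxE.
by field; rewrite T_neq0 !tb_neq0.
Qed.

Lemma expf_div_distn (x : R) m n : x != 0 -> (m <= n)%N ->
  x ^+ m / x ^+ n = x ^- `|n - m|%N.
Proof.
move=> x_neq0 mn; rewrite distnEl // -{1}(subnKC mn) exprD invfM mulrA.
by rewrite divff ?mul1r // expf_neq0.
Qed.

Lemma minor_norm_le_scaled_rowsum n (A : 'M[R]_n) (b : 'I_n -> nat) (g S : R)
    (i0 j0 : 'I_n) :
  1 <= g -> 0 <= S ->
  (forall t : R, 0 < t -> t <= g -> t^-1 <= g ->
     forall i, \sum_j `|t ^+ b i / t ^+ b j * A i j| <= S) ->
  `|\det (row' i0 (col' j0 A))| <= g ^- `|b j0 - b i0|%N * S ^+ n.-1.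
Proof.
case: n A b i0 j0 => [|n] A b i0 j0; first by case: i0.
move=> g_ge1 S_ge0 rowsum /=.
have g_gt0 : 0 < g := lt_le_trans ltr01 g_ge1.
have gV_le : g^-1 <= g by rewrite (le_trans _ g_ge1) // invf_le1.
(* The direction of the scaling is chosen so that the minor of A is
   g^-|b j0 - b i0| times the minor of the scaled matrix. *)
pose t := if (b i0 <= b j0)%N then g else g^-1.
have t_gt0 : 0 < t by rewrite /t; case: ifP; rewrite ?invr_gt0.
have t_ratio : t ^+ b i0 / t ^+ b j0 = g ^- `|b j0 - b i0|%N.
  rewrite /t; case: leqP => [|/ltnW] bij; first by rewrite expf_div_distn ?gt_eqF.
  by rewrite !exprVn invrK mulrC expf_div_distn ?gt_eqF // distnC.
have scaleA := det_minor_scale A b i0 j0 (lt0r_neq0 t_gt0).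
have -> : \det (row' i0 (col' j0 A)) = t ^+ b i0 / t ^+ b j0
    * \det (row' i0 (col' j0 (\matrix_(i, j) (t ^+ b i / t ^+ b j * A i j)))).
  by rewrite scaleA; field; rewrite ?expf_neq0 ?gt_eqF.
have gd_ge0 : 0 <= g ^- `|b j0 - b i0|%N by rewrite invr_ge0 exprn_ge0 // ltW.
rewrite normrM t_ratio ger0_norm // ler_wpM2l //.
apply: det_norm_le_rowsum => // i; apply: le_trans (rowsum t t_gt0 _ _ (lift i0 i)).
- under eq_bigr do rewrite !mxE.
  pose F k := `|t ^+ b (lift i0 i) / t ^+ b k * A (lift i0 i) k|.
  exact: (sum_lift_le (F := F) j0 (fun k => normr_ge0 _)).
- by rewrite /t; case: ifP.
- by rewrite /t; case: ifP; rewrite ?invrK.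
Qed.
End MinorBound.

Lemma card_ord_window M lo hi : (#|[pred j : 'I_M | lo <= j < hi]| <= hi - lo)%N.
Proof.
rewrite cardE -(size_map val) -(size_iota lo (hi - lo)); apply: uniq_leq_size.
  by rewrite map_inj_uniq ?enum_uniq //; exact: val_inj.
move=> _ /mapP[j + ->]; rewrite mem_enum inE => /andP[loj jhi].
by rewrite mem_iota loj subnKC // (leq_trans loj (ltnW jhi)).
Qed.

Lemma sum_window_le (R : numDomainType) M lo hi (B : R) : 0 <= B ->
  \sum_(j < M) (if (lo <= j < hi)%N then B else 0) <= B *+ (hi - lo).
Proof.
by move=> B_ge0; rewrite -big_mkcond sumr_const; apply/ler_wpMn2l/card_ord_window.
Qed.

Lemma norm_ent_le (R : realType) l (A : 'M[R]_l) (P : rel nat) (K : R) :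
  0 <= K -> (forall i k : 'I_l, P i k -> `|A i k| <= K) ->
  forall i k, P i k -> `|ent A i k| <= K.
Proof.
move=> K_ge0 AK i k; rewrite /ent.
case: insubP => [i' _ <-|_]; last by rewrite normr0.
by case: insubP => [k' _ <-|_]; [exact: AK | rewrite normr0].
Qed.

Lemma norm_fent_le (R : realType) l (f : 'I_l -> R) (K : R) k : 0 <= K ->
  (forall j, `|f j| <= K) -> `|fent f k| <= K.
Proof. by move=> K_ge0 fK; rewrite /fent; case: insub => [j|]; rewrite ?normr0. Qed.

Lemma norm_lincomb_le (R : numDomainType) (u v lam B : R) : 0 <= lam ->
  `|u| <= B -> `|v| <= B -> `|- u + lam * v| <= (1 + lam) * B.
Proof.
move=> lam_ge0 uB vB; rewrite mulrDl mul1r.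
apply: le_trans (ler_normD _ _) _; rewrite normrN normrM ger0_norm //.
by rewrite lerD // ler_wpM2l.
Qed.

Section TildeHBounds.
Variables (R : realType) (l N : nat) (W Rm Fm : R -> 'M[R]_l).
Variables (phiF phitF phiR phitR : 'I_l -> R -> R) (K : R).
Hypothesis l_gt0 : (0 < l)%N.
Hypothesis K_ge1 : 1 <= K.
Hypothesis phiFR_le : forall j y, `|phiF j y * phiR j y| <= K.
Hypothesis phitRF_le : forall j y, `|phitR j y * phiF j y| <= K.
Hypothesis phitFR_le : forall j y, `|phitF j y * phiR j y| <= K.
Hypothesis W_le : forall (i k : 'I_l) y, `|W y i k| <= K.
Hypothesis Rm_le : forall (i k : 'I_l) y, i != k -> `|Rm y i k| <= K.
Hypothesis Fm_le : forall (i k : 'I_l) y, i != k -> `|Fm y i k| <= K.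
Variables (w lam E x : R).
Hypothesis lam_gt0 : 0 < lam.

Local Notation g := (1 + lam + `|E|).
Local Notation s := (Num.sqrt (1 + E ^+ 2)).
Local Notation H := (tildeH N W Rm Fm phiF phitF phiR phitR w lam E x).

Let K_ge0 : 0 <= K := le_trans ler01 K_ge1.
Let g_ge1 : 1 <= g.
Proof. by rewrite -addrA lerDl addr_ge0 // ltW. Qed.
Let s_gt0 : 0 < s.
Proof. by rewrite sqrtr_gt0 ltr_pwDl // sqr_ge0. Qed.
Let lam_ge0 : 0 <= lam := ltW lam_gt0.
Let g_ge0 : 0 <= g := le_trans ler01 g_ge1.
Let K_le_K2 : K <= K ^+ 2.
Proof. by rewrite expr2 ler_peMl. Qed.
Let B_ge0 : 0 <= K ^+ 2 / s.
Proof. by rewrite divr_ge0 ?exprn_ge0 // ltW. Qed.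

Lemma tildeH_diag_block_le (r c : 'I_(N * l)) : (r %/ l)%N = (c %/ l)%N ->
  `|H r c| <= g * (K ^+ 2 / s).
Proof.
have gK : (1 + lam) * K * K <= g * K ^+ 2.
  by rewrite expr2 mulrA !ler_wpM2r // lerDl.
move=> rc; rewrite /tildeH mxE /= rc eqxx.
case: ifP => [_|/negbT ne];
  rewrite normrM normfV (gtr0_norm s_gt0) mulrA ler_pM2r ?invr_gt0 //.
  apply: le_trans (ler_normB _ _) _; rewrite normrM.
  apply: le_trans (ler_wpM2l g_ge0 K_le_K2); rewrite mulrDl; apply: lerD.
    by apply: norm_lincomb_le; rewrite // norm_fent_le.
  by rewrite ler_wpM2l // norm_fent_le.
rewrite normrM; apply: le_trans gK; apply: ler_pM => //.
- apply: norm_lincomb_le => //; apply: (norm_ent_le (P := fun i k => i != k)) => // i k.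
    exact: Rm_le.
  exact: Fm_le.
- exact: norm_fent_le.
Qed.

Lemma tildeH_offdiag_block_le (r c : 'I_(N * l)) : (r %/ l != c %/ l)%N ->
  `|H r c| <= K ^+ 2 / s.
Proof.
move=> rc; rewrite /tildeH mxE /= (negbTE rc).
have W_ent y i k : `|ent (W y) i k| <= K.
  by apply: (norm_ent_le (P := fun _ _ => true)) => // i' k' _; exact: W_le.
case: ifP => _; [|case: ifP => _]; rewrite ?normr0 //;
  by rewrite normrM normfV (gtr0_norm s_gt0) ler_pM2r ?invr_gt0 //
             normrM normrN expr2 ler_pM // norm_fent_le.
Qed.

Lemma tildeH_outside_band (r c : 'I_(N * l)) : (r %/ l != c %/ l)%N ->
  (c %/ l != (r %/ l).+1)%N -> (r %/ l != (c %/ l).+1)%N -> H r c = 0.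
Proof.
by move=> rc cr1 rc1; rewrite /tildeH mxE /= (negbTE rc) (negbTE cr1) (negbTE rc1).
Qed.

Lemma scaled_tildeH_le (t : R) (r c : 'I_(N * l)) :
  0 < t -> t <= g -> t^-1 <= g ->
  `|t ^+ (r %/ l) / t ^+ (c %/ l) * H r c|
    <= if ((r %/ l).-1 <= c %/ l <= (r %/ l).+1)%N then g * (K ^+ 2 / s) else 0.
Proof.
move=> t_gt0 tg tVg; have tV_gt0 : 0 < t^-1 by rewrite invr_gt0.
have tn_neq0 n : t ^+ n != 0 by rewrite expf_neq0 // gt_eqF.
rewrite normrM; have [rc|rc] := eqVneq (r %/ l)%N (c %/ l)%N.
  rewrite -rc divff // normr1 mul1r ifT; last by rewrite leq_pred leqnSn.
  exact: tildeH_diag_block_le.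
have off := tildeH_offdiag_block_le rc.
have [cr1|cr1] := eqVneq (c %/ l)%N (r %/ l).+1.
  rewrite cr1 exprS invfM mulrCA divff // mulr1 normfV (gtr0_norm t_gt0) ifT.
    exact: ler_pM (ltW tV_gt0) (normr_ge0 _) tVg off.
  by rewrite leqnn andbT leqW // leq_pred.
have [rc1|rc1] := eqVneq (r %/ l)%N (c %/ l).+1.
  rewrite rc1 exprS mulfK // (gtr0_norm t_gt0) ifT /=.
    exact: ler_pM (ltW t_gt0) (normr_ge0 _) tg off.
  by rewrite leqnn leqW.
by rewrite tildeH_outside_band // normr0 mulr0; case: ifP; rewrite ?mulr_ge0.
Qed.

Lemma scaled_tildeH_rowsum_le (t : R) : 0 < t -> t <= g -> t^-1 <= g ->
  forall r : 'I_(N * l),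
  \sum_(c < N * l) `|t ^+ (r %/ l) / t ^+ (c %/ l) * H r c|
    <= (3 * l)%:R * K ^+ 2 * (g / s).
Proof.
move=> t_gt0 tg tVg r; set a := (r %/ l)%N.
apply: le_trans (ler_sum _ (fun c _ => scaled_tildeH_le r c t_gt0 tg tVg)) _.
have window c : ((a.-1 <= c %/ l <= a.+1) = (a.-1 * l <= c < a.+2 * l))%N.
  by rewrite leq_divRL // -[(c %/ l <= a.+1)%N]ltnS ltn_divLR.
under eq_bigr do rewrite window.
have gB_ge0 : 0 <= g * (K ^+ 2 / s) by rewrite mulr_ge0.
apply: le_trans (sum_window_le _ _ _ gB_ge0) _.
have -> : (3 * l)%:R * K ^+ 2 * (g / s) = g * (K ^+ 2 / s) *+ (3 * l).
  by rewrite -mulr_natl; ring.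
apply/(ler_wpMn2l gB_ge0); rewrite -mulnBl leq_mul2r; apply/orP; right.
by case: (a) => [|a'] //; rewrite -addn3 addKn.
Qed.

Lemma tmu_norm_le (al al' : 'I_(N * l)) :
  `|tmu N W Rm Fm phiF phitF phiR phitR w lam E x al al'|
    <= g ^- `|pidx l al - pidx l al'|%N
       * ((3 * l)%:R * K ^+ 2 * (g / s)) ^+ (N * l).-1.
Proof.
apply: (minor_norm_le_scaled_rowsum (b := fun r => (r %/ l)%N)) => //.
- by rewrite !mulr_ge0 ?divr_ge0 ?exprn_ge0 // ltW.
- exact: scaled_tildeH_rowsum_le.
Qed.

End TildeHBounds.

Section LogBounds.
Variable R : realType.

Lemma energy_ratio_bounds (lam E : R) : 0 < lam -> E != 0 ->
  1 <= (1 + lam + `|E|) / Num.sqrt (1 + E ^+ 2) <= 2 * (1 + lam / `|E|).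
Proof.
move=> lam_gt0 E_neq0; set s := Num.sqrt _; set e := `|E|.
have e_gt0 : 0 < e by rewrite normr_gt0.
have s_ge0 : 0 <= s := sqrtr_ge0 _.
have s2 : s ^+ 2 = 1 + e ^+ 2.
  by rewrite sqr_sqrtr ?addr_ge0 ?sqr_ge0 // /e real_normK ?num_real.
have s_ge1 : 1 <= s by nra.
have e_le_s : e <= s by nra.
have s_gt0 : 0 < s := lt_le_trans ltr01 s_ge1.
apply/andP; split; first by rewrite ler_pdivlMr // mul1r; nra.
set u := lam / e; have ue : u * e = lam by rewrite /u mulfVK ?gt_eqF.
have u_ge0 : 0 <= u by rewrite divr_ge0 ?ltW.
rewrite ler_pdivrMr //; nra.
Qed.

Lemma ln_le_of_power_bound (n d : nat) (m g S : R) : (0 < n)%N -> 0 < m -> 0 < g ->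
  1 <= S -> m <= g ^- d * S ^+ n.-1 ->
  n%:R^-1 * ln m <= - (d%:R / n%:R) * ln g + ln S.
Proof.
move=> n_gt0 m_gt0 g_gt0 S_ge1 mle.
have S_gt0 : 0 < S := lt_le_trans ltr01 S_ge1.
have nR_gt0 : 0 < n%:R :> R by rewrite ltr0n.
have lnm : ln m <= - (d%:R * ln g) + n%:R * ln S.
  apply: (@le_trans _ _ (ln (g ^- d * S ^+ n.-1))).
    by rewrite ler_ln ?posrE // mulr_gt0 ?invr_gt0 ?exprn_gt0.
  rewrite lnM ?posrE ?invr_gt0 ?exprn_gt0 // lnV ?posrE ?exprn_gt0 // !lnXn //.
  by rewrite !mulr_natl lerD2l; exact: ler_wpMn2l (ln_ge0 S_ge1) _ _ (leq_pred n).
have -> : - (d%:R / n%:R) * ln g + ln S = n%:R^-1 * (- (d%:R * ln g) + n%:R * ln S).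
  by field; rewrite gt_eqF.
by rewrite ler_pM2l ?invr_gt0.
Qed.

Lemma normr_natrB (m n : nat) : `|m%:R - n%:R : R| = (`|m - n|%N)%:R.
Proof. by rewrite natr_absz intr_norm rmorphB. Qed.

Lemma ln_minor_estimate (n d : nat) (lam E c m : R) : (0 < n)%N -> 0 < lam -> E != 0 ->
  1 <= c -> 0 < m ->
  m <= (1 + lam + `|E|) ^- d * (c * ((1 + lam + `|E|) / Num.sqrt (1 + E ^+ 2))) ^+ n.-1 ->
  n%:R^-1 * ln m <= - (d%:R / n%:R) * ln (lam + `|E|) + ln (1 + lam / `|E|) + ln (2 * c).
Proof.
move=> n_gt0 lam_gt0 E_neq0 c_ge1 m_gt0.
have /andP[gs_ge1 gs_le] := energy_ratio_bounds lam_gt0 E_neq0.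
set g := 1 + lam + `|E| in gs_ge1 gs_le *; set S := c * (g / _).
have S_ge1 : 1 <= S by rewrite mulr_ege1.
have g_gt0 : 0 < g by rewrite !addr_gt0 ?normr_gt0.
move=> /(ln_le_of_power_bound n_gt0 m_gt0 g_gt0 S_ge1) /le_trans; apply.
have lng : ln (lam + `|E|) <= ln g.
  by rewrite ler_ln ?posrE ?addr_gt0 ?normr_gt0 // /g -addrA lerDr.
have lnS : ln S <= ln (2 * c) + ln (1 + lam / `|E|).
  have c_gt0 : 0 < c := lt_le_trans ltr01 c_ge1.
  have r_gt0 : 0 < 1 + lam / `|E| by rewrite addr_gt0 ?divr_gt0 ?normr_gt0.
  have S_gt0 : 0 < S := lt_le_trans ltr01 S_ge1.
  have cr_gt0 : 0 < 2 * c * (1 + lam / `|E|) by rewrite !mulr_gt0.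
  rewrite -lnM ?posrE ?mulr_gt0 // ler_ln ?posrE //.
  by rewrite /S [2 * c]mulrC -mulrA ler_pM2l.
have := ler_wpM2l (divr_ge0 (ler0n _ d) (ler0n _ n)) lng.
lra.
Qed.

End LogBounds.

Theorem proposition2p1 (R : realType) (l : nat) (W Rm Fm : R -> 'M[R]_l)
  (phiF phitF phiR phitR : 'I_l -> R -> R) :
  (0 < l)%N ->
  (forall x : R, (W x)^T = W x) ->
  (forall x : R, (Rm x)^T = Rm x) ->
  (forall x : R, (Fm x)^T = Fm x) ->
  periodic2pi W -> periodic2pi Rm -> periodic2pi Fm ->
  (forall i k : 'I_l, real_analytic (fun x => W x i k)) ->
  (forall i k : 'I_l, i != k -> real_analytic (fun x => Rm x i k)) ->
  (forall i k : 'I_l, i != k -> real_analytic (fun x => Fm x i k)) ->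
  (forall i : 'I_l, real_analytic (phiF i) /\ real_analytic (phitF i)
                    /\ real_analytic (phiR i) /\ real_analytic (phitR i)) ->
  (forall i : 'I_l, periodic2pi (phiF i) /\ periodic2pi (phitF i)
                    /\ periodic2pi (phiR i) /\ periodic2pi (phitR i)) ->
  (forall i : 'I_l, finitely_many_zeros (phiF i) /\ finitely_many_zeros (phiR i)) ->
  (forall (i : 'I_l) (x : R), phiF i x != 0 -> Fm x i i = phitF i x / phiF i x) ->
  (forall (i : 'I_l) (x : R), phiR i x != 0 -> Rm x i i = phitR i x / phiR i x) ->
  exists C : R, 0 < C /\
    forall (w : R) (N : nat), (1 < N)%N ->
    forall lam E x : R, 0 < lam -> E != 0 ->
    forall al al' : 'I_(N * l),
      let mu := tmu N W Rm Fm phiF phitF phiR phitR w lam E x al al' in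
      mu != 0 ->
      (N * l)%:R^-1 * ln `|mu|
        <= - (`|(pidx l al)%:R - (pidx l al')%:R| / (N * l)%:R) * ln (lam + `|E|)
           + ln (1 + lam / `|E|) + C.
Proof.
move=> l_gt0 _ _ _ Wp Rmp Fmp Wa Rma Fma phia phip _ _ _.
have [K [K_ge1 [phiFR_le [phitRF_le [phitFR_le [W_le [Rm_le Fm_le]]]]]]] :=
  analytic_data_bounded Wp Rmp Fmp Wa Rma Fma phia phip.
set c := (3 * l)%:R * K ^+ 2.
have c_ge1 : 1 <= c by rewrite mulr_ege1 ?ler1n ?muln_gt0 // exprn_ege1.
exists (ln (2 * c) + 1); split.
  by rewrite ltr_wpDl // ln_ge0 // mulr_ege1 // ler1n.
move=> w N N_gt1 lam E x lam_gt0 E_neq0 al al' mu mu_neq0.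
have NL_gt0 : (0 < N * l)%N by rewrite muln_gt0 l_gt0 ltnW.
have mu_le := tmu_norm_le l_gt0 K_ge1 phiFR_le phitRF_le phitFR_le W_le Rm_le Fm_le
  w E x lam_gt0 al al'.
have := ln_minor_estimate NL_gt0 lam_gt0 E_neq0 c_ge1 _ mu_le.
rewrite normr_gt0 mu_neq0 normr_natrB addrA => /(_ isT) /le_trans; apply.
by rewrite lerDl.
Qed.
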